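(* Let $n\ge1$. Then: (1) for a $1$-Lipschitz function $f:S^n\to\mathbb{R}$, we have $f\in E(S^n)$ if and only if $f(x)+f(-x)=\pi$ for all $x\in S^n$; (2) $E(S^n)$ is a compact, convex subset of $\ell_\infty(S^n)$; (3) every $f\in E(S^n)$ takes values in $[0,\pi]$; (4) for $f\in E(S^n)$, we have $f\in E(S^n)\setminus S^n$ if and only if $f$ takes values in $(0,\pi)$.
   Context: $S^n=\{x\in\mathbb{R}^{n+1}:|x|=1\}$ is equipped with its intrinsic geodesic distance $d$. $E(S^n)$ (the injective hull) is the set of $1$-Lipschitz functions $f:S^n\to\mathbb{R}$ satisfying: (i) $d(x,y)\le f(x)+f(y)$ for all $x,y\in S^n$; (ii) for every $x\in S^n$ there exists $y\in S^n$ with $f(x)+f(y)=d(x,y)$. $E(S^n)$ is regarded as a subset of the Banach space $\ell_\infty(S^n)$ of bounded functions with the sup norm. $S^n$ is identified with the subset $\{d_x:x\in S^n\}\subset E(S^n)$, where $d_x(y)=d(x,y)$. *)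

From HB Require Import structures.
From mathcomp Require Import all_boot all_order all_algebra.
From mathcomp Require Import all_classical all_reals all_analysis.
Set Implicit Arguments. Unset Strict Implicit. Unset Printing Implicit Defensive.
Import Order.TTheory GRing.Theory Num.Theory.
Local Open Scope ring_scope.
Local Open Scope classical_set_scope.

Definition dotp {R : realType} {n : nat} (x y : 'rV[R]_n.+1) : R :=
  \sum_(i < n.+1) x 0 i * y 0 i.

Definition sphere (R : realType) (n : nat) : Type :=
  {x : 'rV[R]_n.+1 | dotp x x == 1}.

HB.instance Definition _ (R : realType) (n : nat) :=
  Choice.on (sphere R n).

Definition sdist {R : realType} {n : nat} (x y : sphere R n) : R :=
  acos (dotp (val x) (val y)).

Lemma dotp_oppr_sphere {R : realType} {n : nat} (x : 'rV[R]_n.+1) :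
  dotp x x == 1 -> dotp (- x) (- x) == 1.
Proof.
rewrite /dotp => /eqP <-; apply/eqP; apply: eq_bigr => i _.
by rewrite !mxE mulrNN.
Qed.

Definition antipode {R : realType} {n : nat} (x : sphere R n) : sphere R n :=
  exist _ (- val x) (dotp_oppr_sphere (valP x)).

Definition dpt {R : realType} {n : nat} (x : sphere R n) : sphere R n -> R :=
  fun y => sdist x y.

Definition lipschitz1 {R : realType} {n : nat} (f : sphere R n -> R) : Prop :=
  forall x y, `|f x - f y| <= sdist x y.

Definition injective_hull (R : realType) (n : nat) : set (sphere R n -> R) :=
  [set f | lipschitz1 f
           /\ (forall x y, sdist x y <= f x + f y)
           /\ (forall x, exists y, f x + f y = sdist x y)].
Arguments injective_hull : clear implicits.

From HB Require Import structures.
From mathcomp Require Import all_boot all_order all_algebra.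
From mathcomp Require Import all_classical all_reals all_analysis.
From mathcomp Require Import ring lra finmap.
Import Order.TTheory GRing.Theory Num.Theory numFieldNormedType.Exports.
Local Open Scope ring_scope.
Local Open Scope classical_set_scope.

(* The diameter of the sphere is d(x, -x) = pi, so for
   a 1-Lipschitz f the bound d(x, y) <= f x + f y is just the Lipschitz bound
   between x and -y once f y + f (-y) = pi, and -x is always an optimal partner
   of x.  Then f x >= d(x, x) / 2 = 0 gives (3), both conditions survive convex
   combinations, and f z = 0 forces f = d_z, which gives (4).  Compactness is an
   elementary Arzela-Ascoli argument: along an ultrafilter the uniformly bounded
   functions of E(S^n) converge pointwise, the limit stays in E(S^n), and
   equi-Lipschitz convergence on the totally bounded sphere is uniform. *)

Section equilipschitz.
Context {R : realType} {T : choiceType}.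

Definition totally_bounded_dist (d : T -> T -> R) : Prop :=
  forall e, 0 < e ->
    exists D : {fset T}, forall x, exists2 s, s \in D & d s x < e.

Lemma ultra_cvg_bounded (X : Type) (U : set_system X) (phi : X -> R) (a b : R) :
  UltraFilter U -> U [set u | a <= phi u <= b] -> exists p : R, phi @ U --> p.
Proof.
move=> UU Uab.
have [p [_ clp]] : `[a, b] `&` cluster (phi @ U) !=set0.
  apply: (@segment_compact R a b (phi @ U)); rewrite /fmap /=.
  by apply: filterS Uab => u; rewrite /= in_itv.
exists p; apply/cvgrPdist_lt => e e0.
have [//|Ufar] := in_ultra_setVsetC [set u | `|p - phi u| < e] UU.
have [r [/= far close]] := clp [set r | ~ `|p - r| < e] _ Ufar (nbhsx_ballx p e e0).
by case: far.
Qed.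

Context {d : T -> T -> R} {A : set (T -> R)}.
Hypotheses (d_tb : totally_bounded_dist d)
  (A_lip : forall f, A f -> forall x y, `|f x - f y| <= d x y).

(* Uniform closeness on a finite [e/3]-net propagates to all of [T]. *)
Lemma cvg_uniform_equilipschitz (F : set_system {uniform T -> R}) (g : T -> R) :
  Filter F -> F A -> A g -> (forall x, (fun f => f x) @ F --> g x) ->
  F --> (g : {uniform T -> R}).
Proof.
move=> FF FA Ag Fg P; rewrite uniform_nbhs => -[E [+ EP]].
rewrite -entourage_ballE => -[e /= e0 eE]; apply: filterS EP _.
have e3 : 0 < e / 3 by rewrite divr_gt0.
have [D netD] := d_tb _ e3.
have FD : F (\bigcap_(s in [set` D]) [set f | `|g s - f s| < e / 3]).
  by apply: filter_bigI => s _; exact: (cvgrPdist_lt _ _).1 (Fg s) _ e3.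
apply: filterS (filterI FA FD) => f [Af fD] y _; apply: eE; rewrite /ball /=.
have [s sD dsy] := netD y.
have := fD s sD; have := A_lip _ Ag s y; have := A_lip _ Af s y.
move=> /ler_normlP[? ?] /ler_normlP[? ?] /=; rewrite !ltr_norml => /andP[? ?].
apply/andP; split; lra.
Qed.

(* Closedness for pointwise convergence, tested on two points at a time. *)
Definition two_point_closed (B : set (T -> R)) : Prop :=
  forall g, (forall x y e, 0 < e ->
    exists2 f, B f & `|g x - f x| < e /\ `|g y - f y| < e) -> B g.

Lemma compact_equilipschitz (a b : R) :
  (forall f, A f -> forall x, a <= f x <= b) -> two_point_closed A ->
  compact (A : set {uniform T -> R}).
Proof.
move=> A_bound A_closed; rewrite compact_ultra => U UU UA.
have eval_cvg x : exists p : R, (fun f : {uniform T -> R} => f x) @ U --> p.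
  apply: (ultra_cvg_bounded _ _ _ a b UU).
  by apply: filterS UA => f Af; exact: A_bound.
pose g x := projT1 (cid (eval_cvg x)).
have gE x : (fun f : {uniform T -> R} => f x) @ U --> g x.
  exact: projT2 (cid (eval_cvg x)).
have Ag : A g.
  apply: A_closed => x y e e0.
  have near_g z : U [set f | `|g z - f z| < e].
    exact: (cvgrPdist_lt _ _).1 (gE z) _ e0.
  have [f [Af [fx fy]]] := filter_ex (filterI UA (filterI (near_g x) (near_g y))).
  by exists f.
by exists g; split => //; exact: cvg_uniform_equilipschitz.
Qed.

End equilipschitz.

Section sphere_geometry.
Context {R : realType} {n : nat}.
Implicit Types (x y : sphere R n) (a b : 'rV[R]_n.+1).

Lemma dotpC a b : dotp a b = dotp b a.
Proof. by apply: eq_bigr => i _; rewrite mulrC. Qed.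

Lemma dotpNr a b : dotp a (- b) = - dotp a b.
Proof. by rewrite /dotp -sumrN; apply: eq_bigr => i _; rewrite !mxE mulrN. Qed.

Lemma dotpNl a b : dotp (- a) b = - dotp a b.
Proof. by rewrite dotpC dotpNr dotpC. Qed.

Lemma dotp_ge0 a : 0 <= dotp a a.
Proof. by apply: sumr_ge0 => i _; rewrite -expr2 sqr_ge0. Qed.

Lemma dotpBB a b : dotp (a - b) (a - b) = dotp a a + dotp b b - 2 * dotp a b.
Proof.
rewrite /dotp mulr_sumr -big_split -sumrB /=; apply: eq_bigr => i _.
by rewrite !mxE; ring.
Qed.

Lemma dotp_sphere x : dotp (val x) (val x) = 1.
Proof. exact/eqP/(valP x). Qed.

Lemma dotp_sphere_itv x y : -1 <= dotp (val x) (val y) <= 1.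
Proof.
have := dotp_ge0 (val x - val y); have := dotp_ge0 (val x - - val y).
rewrite !dotpBB dotpNr dotpNl dotpNr opprK !dotp_sphere => ? ?.
by apply/andP; split; lra.
Qed.

Lemma dotp_le_sqr_dist a b (e : R) : (forall i, `|a 0 i - b 0 i| < e) ->
  dotp (a - b) (a - b) <= n.+1%:R * (e * e).
Proof.
move=> ab_e; rewrite mulr_natl -[X in _ *+ X]card_ord -sumr_const.
apply: ler_sum => i _; rewrite !mxE.
by have := ab_e i; rewrite ltr_norml => /andP[? ?]; nra.
Qed.

Lemma sdistC x y : sdist x y = sdist y x.
Proof. by rewrite /sdist dotpC. Qed.

Lemma sdistxx x : sdist x x = 0.
Proof. by rewrite /sdist dotp_sphere acos1. Qed.

Lemma sdist_ge0 x y : 0 <= sdist x y.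
Proof. exact/acos_ge0/dotp_sphere_itv. Qed.

Lemma sdist_lepi x y : sdist x y <= pi.
Proof. exact/acos_lepi/dotp_sphere_itv. Qed.

Lemma sdist_antipoder x y : sdist x (antipode y) = pi - sdist x y.
Proof. by rewrite /sdist /= dotpNr acosN // dotp_sphere_itv. Qed.

Lemma sdist_antipodel x y : sdist (antipode x) y = pi - sdist x y.
Proof. by rewrite sdistC sdist_antipoder sdistC. Qed.

Lemma sdist_antipode x : sdist x (antipode x) = pi.
Proof. by rewrite sdist_antipoder sdistxx subr0. Qed.

Lemma sdist_lt_cos x y (r : R) : 0 < r <= pi ->
  cos r < dotp (val x) (val y) -> sdist x y < r.
Proof.
move=> /andP[r0 rpi] cos_lt.
have rI : r \in `[0, pi]%R by rewrite in_itv /= (ltW r0).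
have sI : sdist x y \in `[0, pi]%R by rewrite in_itv /= sdist_ge0 sdist_lepi.
by rewrite -(ltr_cos sI rI) /sdist acosK //; exact: dotp_sphere_itv.
Qed.

End sphere_geometry.

Section sphere_totally_bounded.
Variables (R : realType) (n : nat).

(* The sphere lies in the compact cube [-1, 1]^(n+1), so its closure is
   covered by finitely many balls centred on the sphere. *)
Lemma sphere_ball_net (e : R) : 0 < e ->
  exists D : {fset sphere R n},
    forall x : sphere R n, exists2 s, s \in D & ball (val s) e (val x).
Proof.
move=> e0.
pose K := [set v : 'rV[R]_n.+1 | forall i, `[-1, 1] (v 0 i)].
have cK : compact K.
  exact: (@rV_compact R n.+1 (fun=> `[-1, 1]) (fun=> @segment_compact _ _ _)).
pose S := [set v : 'rV[R]_n.+1 | dotp v v = 1].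
have SK : S `<=` K.
  move=> v Sv i /=; rewrite in_itv /=.
  have : v 0 i * v 0 i <= 1.
    rewrite -Sv /dotp (bigD1 i) //= lerDl; apply: sumr_ge0 => j _.
    by rewrite -expr2 sqr_ge0.
  by move=> ?; apply/andP; split; nra.
have clK : closed K by apply: compact_closed cK; exact: norm_hausdorff.
have cS : compact (closure S).
  apply: (subclosed_compact _ cK); first exact: closed_closure.
  by rewrite ((closure_id K).1 clK); exact: closureS.
move: cS; rewrite compact_cover.
move=> /(_ (sphere R n) setT (fun s => ball (val s) e)).
case=> [s _|p clp|D _ coverD]; first exact: ball_open.
  have [v [Sv pv]] := clp _ (nbhsx_ballx p e e0).
  by exists (exist _ v (introT eqP Sv)) => //; exact: ball_sym.
exists D => x; have /coverD[s /= sD xs] : closure S (val x).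
  exact/subset_closure/dotp_sphere.
by exists s.
Qed.

Lemma sdist_lt_of_close (r : R) : 0 < r -> exists2 e : R, 0 < e &
  forall x y : sphere R n, (forall i, `|val x 0 i - val y 0 i| < e) -> sdist x y < r.
Proof.
move=> r0; pose r' := Num.min r pi.
have r'_gt0 : 0 < r' by rewrite lt_min r0 pi_gt0.
have r'_itv : 0 < r' <= pi by rewrite r'_gt0 ge_min lexx orbT.
have cos_r'_lt1 : cos r' < 1.
  rewrite -cos0 ltr_cos // in_itv /= ?lexx ?pi_ge0 //.
  by case/andP: r'_itv => /ltW -> ->.
pose eta := 1 - cos r'; have eta_gt0 : 0 < eta by rewrite subr_gt0.
pose e := Num.min 1 (eta / n.+1%:R).
have e_gt0 : 0 < e by rewrite lt_min ltr01 divr_gt0 // ltr0n.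
have e_le1 : e <= 1 by rewrite ge_min lexx.
have e_le : e <= eta / n.+1%:R by rewrite ge_min lexx orbT.
clearbody e.
have sqr_e : n.+1%:R * (e * e) <= eta.
  rewrite mulrC -ler_pdivlMr ?ltr0n //; apply: le_trans _ e_le.
  by rewrite -[leRHS]mulr1 ler_wpM2l ?(ltW e_gt0).
exists e => // x y xy_e.
have := dotp_le_sqr_dist _ _ _ xy_e; rewrite dotpBB !dotp_sphere => ?.
apply: (@lt_le_trans _ _ r'); last by rewrite ge_min lexx.
by apply: sdist_lt_cos => //; rewrite /eta in sqr_e; lra.
Qed.

Lemma sphere_totally_bounded : totally_bounded_dist (@sdist R n).
Proof.
move=> r r0; have [e e0 close_lt] := sdist_lt_of_close _ r0.
have [D netD] := sphere_ball_net _ e0.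
exists D => x; have [s sD [_ sx]] := netD x.
by exists s => //; apply: close_lt => i; exact: sx.
Qed.

End sphere_totally_bounded.

Section injective_hull.
Context {R : realType} {n : nat}.
Implicit Types (f g : sphere R n -> R) (x y : sphere R n).

Lemma hull_antipodeP f : lipschitz1 f ->
  injective_hull R n f <-> forall x, f x + f (antipode x) = pi.
Proof.
move=> Lf; split=> [[_ [ge_dist optimal]] x|antipode_pi].
  have := ge_dist x (antipode x); rewrite sdist_antipode.
  have [y fxy] := optimal x.
  have /ler_normlP[_] := Lf (antipode x) y; rewrite sdist_antipodel; lra.
split=> //; split=> [x y|x]; last by exists (antipode x); rewrite sdist_antipode.
have /ler_normlP[+ _] := Lf x (antipode y); rewrite sdist_antipoder.
by have := antipode_pi y; lra.
Qed.

Lemma hull_range f : injective_hull R n f -> forall x, 0 <= f x <= pi.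
Proof.
move=> hf x; have [_ [ge_dist _]] := hf.
have f_ge0 y : 0 <= f y by have := ge_dist y y; rewrite sdistxx; lra.
have := (hull_antipodeP _ hf.1).1 hf x; have := f_ge0 x; have := f_ge0 (antipode x).
by move=> *; apply/andP; split; lra.
Qed.

Lemma hull_convex f g (t : R) :
  injective_hull R n f -> injective_hull R n g -> 0 <= t <= 1 ->
  injective_hull R n (fun x => t * f x + (1 - t) * g x).
Proof.
move=> hf hg /andP[t_ge0 t_le1]; have t'_ge0 : 0 <= 1 - t by lra.
have Lh : lipschitz1 (fun x => t * f x + (1 - t) * g x).
  move=> x y.
  rewrite (_ : _ - _ = t * (f x - f y) + (1 - t) * (g x - g y)); last by ring.
  apply: le_trans (ler_normD _ _) _.
  rewrite !normrM (ger0_norm t_ge0) (ger0_norm t'_ge0).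
  have := ler_wpM2l t_ge0 (hf.1 x y); have := ler_wpM2l t'_ge0 (hg.1 x y); lra.
apply/(hull_antipodeP _ Lh) => x.
have fpi := (hull_antipodeP _ hf.1).1 hf x.
have gpi := (hull_antipodeP _ hg.1).1 hg x.
transitivity (t * (f x + f (antipode x)) + (1 - t) * (g x + g (antipode x))).
  by ring.
by rewrite fpi gpi; ring.
Qed.

Lemma hull_eq_dpt f z : injective_hull R n f -> f z = 0 -> f = dpt z.
Proof.
move=> [Lf [ge_dist _]] fz; apply: funext => w.
have /ler_normlP[_] := Lf w z; have := ge_dist z w.
by rewrite /dpt sdistC; lra.
Qed.

Lemma hull_notin_sphereP f : injective_hull R n f ->
  (~ exists x, f = dpt x) <-> forall y, 0 < f y < pi.
Proof.
move=> hf; have range_f := hull_range _ hf.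
split=> [notin y|in_itv [x fx]]; last first.
  by have := in_itv x; rewrite fx /dpt sdistxx ltxx.
have /andP[f_ge0 f_lepi] := range_f y.
rewrite !lt_neqAle f_ge0 f_lepi !andbT; apply/andP; split; apply/negP => /eqP fy.
  by apply: notin; exists y; exact: hull_eq_dpt.
apply: notin; exists (antipode y); apply: hull_eq_dpt => //.
by have := (hull_antipodeP _ hf.1).1 hf y; lra.
Qed.

Lemma hull_two_point_closed : two_point_closed (injective_hull R n).
Proof.
move=> g approx.
have approx2 x y e : 0 < e -> exists2 f, injective_hull R n f &
    `|g x - f x| < e / 2 /\ `|g y - f y| < e / 2.
  by move=> e0; apply: approx; rewrite divr_gt0.
have Lg : lipschitz1 g.
  move=> x y; apply/ler_addgt0Pr => e /(approx2 x y)[f hf [+ +]].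
  rewrite !ltr_norml => /andP[? ?] /andP[? ?].
  have /ler_normlP[? ?] := hf.1 x y; rewrite ler_norml; apply/andP; split; lra.
apply/(hull_antipodeP _ Lg) => x; apply/eqP; rewrite -subr_eq0 -normr_le0.
apply/ler_addgt0Pr => e /(approx2 x (antipode x))[f hf [+ +]]; rewrite add0r.
have := (hull_antipodeP _ hf.1).1 hf x.
by rewrite !ltr_norml ler_norml => ? /andP[? ?] /andP[? ?]; apply/andP; split; lra.
Qed.

Lemma hull_compact : compact (injective_hull R n : set {uniform sphere R n -> R}).
Proof.
exact (compact_equilipschitz (sphere_totally_bounded R n)
  (fun f (hf : injective_hull R n f) => hf.1) _ _ hull_range hull_two_point_closed).
Qed.

End injective_hull.

Theorem proposition2p7 (R : realType) (n : nat) (hn : (1 <= n)%N) :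
  (* (1) *)
  (forall f : sphere R n -> R, lipschitz1 f ->
     (injective_hull R n f <-> forall x, f x + f (antipode x) = pi))
  (* (2) compact in the sup-norm topology (= uniform convergence) and convex *)
  /\ compact (injective_hull R n : set {uniform sphere R n -> R})
  /\ (forall (f g : sphere R n -> R) (t : R),
        injective_hull R n f -> injective_hull R n g -> 0 <= t <= 1 ->
        injective_hull R n (fun x => t * f x + (1 - t) * g x))
  (* (3) *)
  /\ (forall f, injective_hull R n f -> forall x, 0 <= f x <= pi)
  (* (4) *)
  /\ (forall f, injective_hull R n f ->
        ((~ exists x : sphere R n, f = dpt x) <-> forall y, 0 < f y < pi)).
Proof.
split; first exact: hull_antipodeP.
split; first exact: hull_compact.
split; first exact: hull_convex.
split; first exact: hull_range.
exact: hull_notin_sphereP.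
Qed.
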